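(* Let $\Delta \ge 1$ and $\alpha > \Delta$ be integers. There is an infinite family of graphs of maximum degree $\Delta$ and an absolute constant $C>0$ such that for every graph $G=(V,E)$ in the family and every assignment of nonempty sets $L(v) \subseteq \{1,\dots,\alpha\}$ to the vertices $v\in V$ with the property that every choice of one color $\ell_v \in L(v)$ for each $v \in V$ yields a proper $\alpha$-coloring of $G$, we have $\min_{v\in V}|L(v)| \le C\alpha/\Delta$, i.e. the solution domain has size $O(\alpha/\Delta)$. Consequently the contingency factor $\alpha/\min_{v}|L(v)|$ is $\Omega(\Delta)$.
   Context: A proper $\alpha$-coloring of a graph $G=(V,E)$ is a map $\varphi:V\to\{1,\dots,\alpha\}$ with $\varphi(u)\neq\varphi(v)$ for every edge $\{u,v\}\in E$. A ''generic algorithm'' for $\alpha$-coloring outputs for every vertex $v$ a set $L(v)$ of candidate colors such that any selection of one color from each set is a proper $\alpha$-coloring; the vertex then privately picks one of its candidates at random. The size of the problem domain is $\alpha$ (the number of available labels), the size of the solution domain is $k=\min_v |L(v)|$, and the contingency factor is $\alpha/k$. *)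

From mathcomp Require Import all_boot all_order all_algebra.
Set Implicit Arguments. Unset Strict Implicit. Unset Printing Implicit Defensive.

Record sgraph := SGraph {
  nv : nat;
  adj : rel 'I_nv;
  adj_sym : symmetric adj;
  adj_irr : irreflexive adj }.

Definition deg (G : sgraph) (v : 'I_(nv G)) : nat := #|[set u | adj v u]|.

Definition max_deg (G : sgraph) : nat := \max_(v : 'I_(nv G)) deg v.

(* proper alpha-coloring, colors are 'I_alpha (i.e. {1..alpha} shifted by one) *)
Definition proper_coloring (G : sgraph) (alpha : nat) (phi : 'I_(nv G) -> 'I_alpha) :=
  forall u v, adj u v -> phi u != phi v.

(* Output of a generic algorithm for alpha-coloring: nonempty candidate sets
   such that every selection of one candidate per vertex is a proper coloring. *)
Definition generic_lists (G : sgraph) (alpha : nat) (L : 'I_(nv G) -> {set 'I_alpha}) :=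
  (forall v, L v != set0) /\
  (forall phi : 'I_(nv G) -> 'I_alpha, (forall v, phi v \in L v) -> proper_coloring phi).

From mathcomp Require Import all_boot all_order all_algebra.
Import Order.TTheory GRing.Theory Num.Theory.
Local Open Scope ring_scope.

(* Adjacent vertices must receive disjoint candidate sets: a common candidate
   could be selected at both ends of the edge.  Hence on a clique with Delta + 1
   vertices the candidate sets are pairwise disjoint subsets of the alpha colors,
   and the smallest one has at most alpha / (Delta + 1) elements.  A clique on
   Delta + 1 vertices padded with k isolated vertices has maximum degree Delta,
   which gives the infinite family. *)

Section FiniteSums.
Local Open Scope nat_scope.

Lemma sum_card_disjoint_family {T I : finType} (F : I -> {set T}) :
  (forall i j, i != j -> [disjoint F i & F j]) -> \sum_i #|F i| <= #|T|.
Proof.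
move=> disjF; under eq_bigr do rewrite -sum1_card.
rewrite -(partition_disjoint_bigcup addn) // sum1_card.
exact: max_card.
Qed.

Lemma exists_card_mul_le_sum {I : finType} (i0 : I) {f : I -> nat} {a : nat} :
  \sum_i f i <= a -> exists i, #|I| * f i <= a.
Proof.
case: (arg_minnP f (isT : predT i0)) => i _ fi_min sum_le.
exists i; apply: leq_trans sum_le.
by rewrite -sum_nat_const; apply: leq_sum => j _; apply: fi_min.
Qed.

End FiniteSums.

Section GenericLists.
Local Open Scope nat_scope.
Context {G : sgraph} {alpha : nat} {L : 'I_(nv G) -> {set 'I_alpha}}.
Hypothesis genL : generic_lists L.

Lemma generic_lists_adj_disjoint u v : adj u v -> [disjoint L u & L v].
Proof.
case: genL => L_neq0 L_proper uv.
rewrite -setI_eq0; apply: contraT => /set0Pn [c]; rewrite inE => /andP [cu cv].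
pose phi x := if (x == u) || (x == v) then c else odflt c [pick y in L x].
have phi_in x : phi x \in L x.
  rewrite /phi; case: eqP => [-> //|_]; case: eqP => [-> //|_] /=.
  by case: pickP => //= /eq_card0 L0; move: (L_neq0 x); rewrite -cards_eq0 L0.
by have := L_proper phi phi_in u v uv; rewrite /phi !eqxx orbT eqxx.
Qed.

Lemma generic_lists_clique {I : finType} {f : I -> 'I_(nv G)} :
  (forall i j, i != j -> adj (f i) (f j)) -> \sum_i #|L (f i)| <= alpha.
Proof.
move=> f_clique; rewrite -[X in _ <= X]card_ord.
apply: sum_card_disjoint_family => i j ij.
exact/generic_lists_adj_disjoint/f_clique.
Qed.

End GenericLists.

Section CliqueWithIsolated.
Local Open Scope nat_scope.
Variables (m k : nat).

Definition clique_part : {set 'I_(m + k)} := [set lshift k i | i : 'I_m].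

Definition clique_adj : rel 'I_(m + k) :=
  fun u v => [&& u != v, u \in clique_part & v \in clique_part].

Lemma clique_adj_sym : symmetric clique_adj.
Proof. by move=> u v; rewrite /clique_adj eq_sym [(u \in _) && _]andbC. Qed.

Lemma clique_adj_irr : irreflexive clique_adj.
Proof. by move=> u; rewrite /clique_adj eqxx. Qed.

Definition clique_with_isolated : sgraph := SGraph clique_adj_sym clique_adj_irr.

Lemma clique_adj_lshift (i j : 'I_m) :
  i != j -> clique_adj (lshift k i) (lshift k j).
Proof.
by move=> ij; rewrite /clique_adj !imset_f // (inj_eq (@lshift_inj m k)) ij.
Qed.

Lemma card_clique_part : #|clique_part| = m.
Proof. by rewrite card_imset ?card_ord //; apply: lshift_inj. Qed.

Lemma deg_clique_with_isolated (v : 'I_(m + k)) :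
  @deg clique_with_isolated v = if v \in clique_part then m.-1 else 0.
Proof.
rewrite /deg /=; case: ifP => v_clique.
  have -> : [set u | clique_adj v u] = clique_part :\ v.
    by apply/setP => u; rewrite !inE /clique_adj v_clique eq_sym.
  have := cardsD1 v clique_part; rewrite v_clique card_clique_part => m_eq.
  by rewrite [in RHS]m_eq.
have -> : [set u | clique_adj v u] = set0.
  by apply/setP => u; rewrite !inE /clique_adj v_clique andbF.
by rewrite cards0.
Qed.

Lemma max_deg_clique_with_isolated : 0 < m -> max_deg clique_with_isolated = m.-1.
Proof.
move=> m_gt0; apply/eqP; rewrite eqn_leq; apply/andP; split.
  apply/bigmax_leqP => v _; rewrite deg_clique_with_isolated.
  by case: (v \in _).
pose v0 := lshift k (Ordinal m_gt0).
apply: leq_trans (leq_bigmax (F := @deg clique_with_isolated) v0).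
by rewrite deg_clique_with_isolated imset_f.
Qed.

End CliqueWithIsolated.

Theorem theorem1 :
  exists C : rat, 0 < C /\
  forall Delta alpha : nat, (1 <= Delta)%N -> (Delta < alpha)%N ->
  exists F : nat -> sgraph,
    injective (fun k => nv (F k)) /\
    (forall k, max_deg (F k) = Delta) /\
    (forall k (L : 'I_(nv (F k)) -> {set 'I_alpha}),
       generic_lists L ->
       exists v : 'I_(nv (F k)),
         (#|L v|%:R : rat) <= C * alpha%:R / Delta%:R).
Proof.
exists 1; split => // D alpha D_gt0 _.
exists (clique_with_isolated D.+1); split; first exact: addnI.
split=> [k|k L genL]; first exact: max_deg_clique_with_isolated.
have [i] := exists_card_mul_le_sum ord0
  (generic_lists_clique genL (@clique_adj_lshift D.+1 k)).
rewrite card_ord => Lv_small.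
exists (lshift k i).
rewrite mul1r ler_pdivlMr ?ltr0n // -natrM ler_nat mulnC.
by apply: leq_trans Lv_small; rewrite leq_mul2r leqnSn orbT.
Qed.
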